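(* Let $\alpha>0$, $\lambda\in(0,1)$, and $N(\alpha,\lambda)=\max\{[\alpha/\lambda]+1,[1/(\lambda\alpha)]+1\}$, where $[x]$ is the greatest integer $\le x$. For every integer $n\ge N(\alpha,\lambda)$, $$\binom{n}{\left[\frac{\alpha(n+1)}{\alpha+1}\right]}\alpha^{\left[\frac{\alpha(n+1)}{\alpha+1}\right]}\le\frac{M(\alpha,\lambda)}{\sqrt{2\pi}}n^{-1/2}(1+\alpha)^n,\qquad\text{where } M(\alpha,\lambda)=\frac{\alpha+1}{\sqrt\alpha}\cdot\frac{1}{1-\lambda}.$$ *)

From Stdlib Require Import Reals ZArith.
Open Scope R_scope.

(* [x] = greatest integer <= x; Stdlib's Int_part x = up x - 1 is exactly floor. *)
Definition floorZ (x : R) : Z := Int_part x.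

Definition Nthreshold (a l : R) : Z :=
  Z.max (floorZ (a / l) + 1) (floorZ (1 / (l * a)) + 1).

(* the index k_n = [alpha (n+1)/(alpha+1)], as a natural number (it is >= 0) *)
Definition kidx (a : R) (n : nat) : nat :=
  Z.to_nat (floorZ (a * (INR n + 1) / (a + 1))).

Definition Mconst (a l : R) : R := (a + 1) / sqrt a * (1 / (1 - l)).

From Stdlib Require Import Reals ZArith Lra Lia Psatz.
From Coquelicot Require Import Coquelicot.
Open Scope R_scope.

(** Write [k] for the index [kidx a n] and [r = n - k].  Stirling's formula with
    explicit error terms, [2 pi <= m!^2 e^(2m) / m^(2m+1) <= 2 pi e^(1/(6m))], bounds
    [binom(n,k)^2] by [e^(1/(6n)) n^(2n+1) / (2 pi k^(2k+1) r^(2r+1))], and weighted AM-GM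
    gives [n^n a^k <= k^k r^r (1+a)^n]; hence
    [(binom(n,k) a^k)^2 <= e^(1/(6n)) n (1+a)^(2n) / (2 pi k r)].  The floor defining [k]
    puts [k (1+a) - a n] in [(-1, a]], and [n >= N(a, lambda)] then forces
    [k r (a+1)^2 >= e^(1/(6n)) n^2 a (1-lambda)^2], which is the claim squared.
    The two Stirling bounds come from the monotonicity of the ratio and its corrected
    version, squeezed against Wallis' integrals. *)

Lemma exp_le_exp x y : x <= y -> exp x <= exp y.
Proof. intros [hlt | ->]; [now left; apply exp_increasing | lra]. Qed.

Lemma exp_le_1_add_2x x : 0 <= x <= 1 / 2 -> exp x <= 1 + 2 * x.
Proof.
  intros hx.
  assert (hinv : exp x * exp (- x) = 1) by (rewrite <- exp_plus, Rplus_opp_r; apply exp_0).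
  pose proof (exp_ineq1_le (- x)). pose proof (exp_pos x).
  nra.
Qed.

Lemma ln_le_sub_1 y : 0 < y -> ln y <= y - 1.
Proof. intros hy. pose proof (exp_ineq1_le (ln y)) as hexp. rewrite exp_ln in hexp by exact hy. lra. Qed.

Lemma div_le_div_iff a b c d : 0 < b -> 0 < d -> a / b <= c / d <-> a * d <= c * b.
Proof.
  intros hb hd.
  replace (a * d) with (a / b * (b * d)) by (field; lra).
  replace (c * b) with (c / d * (b * d)) by (field; lra).
  split; intro h.
  - apply Rmult_le_compat_r; [nra | exact h].
  - apply Rmult_le_reg_r with (b * d); [nra | exact h].
Qed.

Lemma le_of_forall_le_add_div x y c j : 0 <= c ->
  (forall n, (j <= n)%nat -> (1 <= n)%nat -> x <= y + c / INR n) -> x <= y.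
Proof.
  intros hc hxy.
  destruct (Rle_or_lt x y) as [hle | hlt]; [exact hle | exfalso].
  destruct (archimed_cor1 ((x - y) / (c + 1))) as [N [hN hN0]].
  { apply Rdiv_lt_0_compat; lra. }
  specialize (hxy (N + j)%nat ltac:(lia) ltac:(lia)).
  assert (hNpos : 0 < INR N) by (apply lt_0_INR; lia).
  assert (hinv : / INR (N + j) <= / INR N) by (apply Rinv_le_contravar, le_INR; [lra | lia]).
  assert (hdiv : c / INR (N + j) <= (c + 1) * / INR N).
  { unfold Rdiv. apply Rmult_le_compat; try lra. apply Rlt_le, Rinv_0_lt_compat, lt_0_INR. lia. }
  assert ((c + 1) * / INR N < x - y).
  { replace (x - y) with ((c + 1) * ((x - y) / (c + 1))) by (field; lra).
    apply Rmult_lt_compat_l; lra. }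
  lra.
Qed.

Lemma nonneg_of_derive_nonneg (f df : R -> R) t :
  0 <= t -> f 0 = 0 ->
  (forall x, 0 <= x <= t -> is_derive f x (df x)) ->
  (forall x, 0 <= x <= t -> 0 <= df x) ->
  0 <= f t.
Proof.
  intros ht hf0 hder hpos.
  destruct ht as [ht | <-]; [|lra].
  destruct (MVT_cor2 f df 0 t ht) as [c [hc hct]].
  { intros c hc. apply is_derive_Reals, hder, hc. }
  pose proof (hpos c ltac:(lra)). nra.
Qed.

Lemma ln_ratio_ge t : 0 <= t < 1 -> 2 * t <= ln (1 + t) - ln (1 - t).
Proof.
  intros ht.
  apply Rminus_le_0.
  apply (nonneg_of_derive_nonneg (fun x => ln (1 + x) - ln (1 - x) - 2 * x)
    (fun x => 2 * x ^ 2 / (1 - x ^ 2))); try lra.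
  - cbv beta. rewrite Rplus_0_r, Rminus_0_r, ln_1. ring.
  - intros x hx. auto_derive; [lra|]. field. nra.
  - intros x hx. apply Rmult_le_pos; [nra|]. apply Rlt_le, Rinv_0_lt_compat. nra.
Qed.

Lemma ln_ratio_le t : 0 <= t < 1 ->
  ln (1 + t) - ln (1 - t) <= 2 * t + 2 * t ^ 3 / (3 * (1 - t ^ 2)).
Proof.
  intros ht.
  apply Rminus_le_0.
  apply (nonneg_of_derive_nonneg
    (fun x => 2 * x + 2 * x ^ 3 / (3 * (1 - x ^ 2)) - (ln (1 + x) - ln (1 - x)))
    (fun x => 4 / 3 * x ^ 4 / (1 - x ^ 2) ^ 2)); try lra.
  - cbv beta. rewrite Rplus_0_r, Rminus_0_r, ln_1. field.
  - intros x hx. auto_derive; [repeat split; nra|]. field. repeat split; nra.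
  - intros x hx. apply Rmult_le_pos; [nra|]. apply Rlt_le, Rinv_0_lt_compat.
    assert (0 < 1 - x ^ 2) by nra. nra.
Qed.

Lemma ln_succ_div_bounds x : 0 < x ->
  2 <= (2 * x + 1) * ln ((x + 1) / x) <= 2 + / (6 * x * (x + 1)).
Proof.
  intros hx.
  set (t := / (2 * x + 1)).
  assert (ht : 0 <= t < 1).
  { unfold t. split; [apply Rlt_le, Rinv_0_lt_compat; lra|].
    rewrite <- Rinv_1. apply Rinv_lt_contravar; lra. }
  assert (hln : ln ((x + 1) / x) = ln (1 + t) - ln (1 - t)).
  { rewrite <- ln_div by lra. f_equal. unfold t. field. lra. }
  rewrite hln.
  assert (hlow := ln_ratio_ge t ht). assert (hup := ln_ratio_le t ht).
  assert (e1 : (2 * x + 1) * (2 * t) = 2) by (unfold t; field; lra).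
  assert (e2 : (2 * x + 1) * (2 * t + 2 * t ^ 3 / (3 * (1 - t ^ 2))) = 2 + / (6 * x * (x + 1)))
    by (unfold t; field; repeat split; nra).
  split.
  - apply Rle_trans with ((2 * x + 1) * (2 * t)); [lra|].
    apply Rmult_le_compat_l; lra.
  - apply Rle_trans with ((2 * x + 1) * (2 * t + 2 * t ^ 3 / (3 * (1 - t ^ 2)))); [|lra].
    apply Rmult_le_compat_l; lra.
Qed.

(** * Monotonicity of the Stirling ratio *)

(** The square of Stirling's ratio [m! e^m / m^(m + 1/2)]; squaring avoids square roots. *)
Definition stirling_sq (m : nat) : R :=
  INR (fact m) ^ 2 * exp (2 * INR m) / INR m ^ (2 * m + 1).

Lemma stirling_sq_pos m : (1 <= m)%nat -> 0 < stirling_sq m.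
Proof.
  intros hm. assert (0 < INR m) by (apply lt_0_INR; lia).
  unfold stirling_sq. apply Rdiv_lt_0_compat; [|now apply pow_lt].
  apply Rmult_lt_0_compat; [apply pow_lt, lt_0_INR, lt_O_fact | apply exp_pos].
Qed.

Lemma stirling_sq_succ m : (1 <= m)%nat ->
  stirling_sq (S m) = stirling_sq m * exp (2 - (2 * INR m + 1) * ln ((INR m + 1) / INR m)).
Proof.
  intros hm. assert (hx : 0 < INR m) by (apply lt_0_INR; lia).
  assert (hq : 0 < (INR m + 1) / INR m) by (apply Rdiv_lt_0_compat; lra).
  assert (hpow : exp ((2 * INR m + 1) * ln ((INR m + 1) / INR m)) = ((INR m + 1) / INR m) ^ (2 * m + 1)).
  { replace (2 * INR m + 1) with (INR (2 * m + 1)) by (rewrite plus_INR, mult_INR; simpl; ring).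
    rewrite <- ln_pow by exact hq. apply exp_ln, pow_lt, hq. }
  unfold Rminus. rewrite exp_plus, exp_Ropp, hpow.
  unfold stirling_sq. rewrite fact_simpl, mult_INR, S_INR.
  replace (2 * S m + 1)%nat with (2 * m + 1 + 2)%nat by lia.
  replace (2 * (INR m + 1)) with (2 * INR m + 2) by ring.
  unfold Rdiv. rewrite exp_plus, pow_add, !Rpow_mult_distr, pow_inv.
  field. repeat split; try apply pow_nonzero; try apply exp_neq_0; lra.
Qed.

Lemma stirling_sq_succ_le m : (1 <= m)%nat -> stirling_sq (S m) <= stirling_sq m.
Proof.
  intros hm. assert (hx : 0 < INR m) by (apply lt_0_INR; lia).
  rewrite stirling_sq_succ by exact hm.
  destruct (ln_succ_div_bounds (INR m) hx) as [hlow _].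
  rewrite <- (Rmult_1_r (stirling_sq m)) at 2.
  apply Rmult_le_compat_l; [now apply Rlt_le, stirling_sq_pos|].
  apply Rle_trans with (exp 0); [apply exp_le_exp; lra | rewrite exp_0; lra].
Qed.

Lemma stirling_sq_succ_ge m : (1 <= m)%nat ->
  stirling_sq m * exp (- / (6 * INR m * (INR m + 1))) <= stirling_sq (S m).
Proof.
  intros hm. assert (hx : 0 < INR m) by (apply lt_0_INR; lia).
  rewrite stirling_sq_succ by exact hm.
  destruct (ln_succ_div_bounds (INR m) hx) as [_ hup].
  apply Rmult_le_compat_l; [now apply Rlt_le, stirling_sq_pos|].
  apply exp_le_exp. lra.
Qed.

Lemma stirling_sq_antimono m n : (1 <= m)%nat -> (m <= n)%nat ->
  stirling_sq n <= stirling_sq m.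
Proof.
  intros hm. induction 1 as [|n hmn IH]; [lra|].
  apply Rle_trans with (stirling_sq n); [apply stirling_sq_succ_le; lia | exact IH].
Qed.

Lemma stirling_sq_corrected_mono m n : (1 <= m)%nat -> (m <= n)%nat ->
  stirling_sq m * exp (- / (6 * INR m)) <= stirling_sq n * exp (- / (6 * INR n)).
Proof.
  intros hm. induction 1 as [|n hmn IH]; [lra|].
  apply Rle_trans with (1 := IH).
  assert (hx : 0 < INR n) by (apply lt_0_INR; lia).
  assert (hsplit : exp (- / (6 * INR n))
    = exp (- / (6 * INR n * (INR n + 1))) * exp (- / (6 * INR (S n)))).
  { rewrite <- exp_plus, S_INR. f_equal. field. lra. }
  rewrite hsplit, <- Rmult_assoc.
  apply Rmult_le_compat_r; [apply Rlt_le, exp_pos|].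
  apply stirling_sq_succ_ge. lia.
Qed.

(** * Wallis integrals *)

Definition wallis (n : nat) : R := RInt (fun x => sin x ^ n) 0 (PI / 2).

Lemma ex_RInt_sin_pow n : ex_RInt (fun x => sin x ^ n) 0 (PI / 2).
Proof.
  apply (ex_RInt_continuous (V := R_CompleteNormedModule)). intros x _.
  apply (ex_derive_continuous (V := R_NormedModule)). auto_derive. exact I.
Qed.

Lemma wallis_0 : wallis 0 = PI / 2.
Proof. unfold wallis. simpl pow. rewrite RInt_const. unfold scal; simpl. unfold mult; simpl. ring. Qed.

Lemma wallis_1 : wallis 1 = 1.
Proof.
  unfold wallis.
  rewrite (is_RInt_unique _ _ _ (minus (- cos (PI / 2)) (- cos 0))).
  - rewrite cos_PI2, cos_0. unfold minus, plus, opp; simpl. ring.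
  - apply (is_RInt_derive (fun x => - cos x)).
    + intros x _. auto_derive; [exact I | ring].
    + intros x _. apply (ex_derive_continuous (V := R_NormedModule)). auto_derive. exact I.
Qed.

Lemma wallis_rec n : INR (n + 2) * wallis (n + 2) = INR (n + 1) * wallis n.
Proof.
  set (F := fun x => - cos x * sin x ^ (n + 1)).
  set (g := fun x => INR (n + 2) * sin x ^ (n + 2) - INR (n + 1) * sin x ^ n).
  assert (hg : is_RInt g 0 (PI / 2) (minus (F (PI / 2)) (F 0))).
  { apply (is_RInt_derive F).
    - intros x _. unfold F. auto_derive; [exact I|].
      unfold g. replace (n + 2)%nat with (S (S n)) by lia. replace (n + 1)%nat with (S n) by lia.
      rewrite !S_INR. simpl.
      pose proof (sin2_cos2 x) as hpyth. unfold Rsqr in hpyth.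
      match goal with |- ?lhs = ?rhs =>
        replace lhs with (rhs + (INR n + 1) * sin x ^ n * (1 - (sin x * sin x + cos x * cos x)))
          by ring end.
      rewrite hpyth. ring.
    - intros x _. apply (ex_derive_continuous (V := R_NormedModule)). unfold g. auto_derive. exact I. }
  assert (hF : minus (F (PI / 2)) (F 0) = 0).
  { unfold F. rewrite cos_PI2, sin_0, pow_i by lia. unfold minus, plus, opp; simpl. ring. }
  assert (hlin : is_RInt g 0 (PI / 2) (INR (n + 2) * wallis (n + 2) - INR (n + 1) * wallis n)).
  { exact (is_RInt_minus _ _ _ _ _ _
      (is_RInt_scal _ _ _ _ _ (RInt_correct _ _ _ (ex_RInt_sin_pow (n + 2))))
      (is_RInt_scal _ _ _ _ _ (RInt_correct _ _ _ (ex_RInt_sin_pow n)))). }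
  rewrite hF in hg.
  apply (is_RInt_unique (V := R_CompleteNormedModule)) in hg, hlin. lra.
Qed.

Lemma wallis_succ_le n : wallis (S n) <= wallis n.
Proof.
  pose proof PI_RGT_0.
  apply RInt_le; try apply ex_RInt_sin_pow; [lra|].
  intros x hx. assert (0 <= sin x) by (apply sin_ge_0; lra).
  pose proof (SIN_bound x). simpl.
  rewrite <- (Rmult_1_l (sin x ^ n)) at 2.
  apply Rmult_le_compat_r; [apply pow_le|]; lra.
Qed.

Lemma central_binomial_pos m : 0 < Binomial.C (2 * m) m.
Proof.
  unfold Binomial.C. apply Rdiv_lt_0_compat; [|apply Rmult_lt_0_compat];
    apply lt_0_INR, lt_O_fact.
Qed.

Lemma central_binomial_succ m :
  Binomial.C (2 * S m) (S m) = Binomial.C (2 * m) m * (2 * (2 * INR m + 1) / (INR m + 1)).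
Proof.
  unfold Binomial.C.
  replace (2 * S m - S m)%nat with (S m) by lia. replace (2 * m - m)%nat with m by lia.
  replace (2 * S m)%nat with (S (S (2 * m))) by lia.
  rewrite !fact_simpl, !mult_INR, !S_INR, mult_INR.
  pose proof (lt_0_INR _ (lt_O_fact m)). pose proof (lt_0_INR _ (lt_O_fact (2 * m))).
  pose proof (pos_INR m).
  simpl INR. field. lra.
Qed.

Lemma wallis_closed_forms m :
  wallis (2 * m) = PI / 2 * Binomial.C (2 * m) m / 4 ^ m /\
  wallis (2 * m + 1) = 4 ^ m / ((2 * INR m + 1) * Binomial.C (2 * m) m).
Proof.
  induction m as [|m [IHeven IHodd]].
  - simpl. rewrite wallis_0, wallis_1, C_n_n. split; field.
  - pose proof (central_binomial_pos m). pose proof (pos_INR m).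
    assert (0 < 4 ^ m) by (apply pow_lt; lra).
    pose proof (wallis_rec (2 * m)) as heven. pose proof (wallis_rec (2 * m + 1)) as hodd.
    replace (2 * m + 2)%nat with (2 * S m)%nat in heven by lia.
    replace (2 * m + 1 + 2)%nat with (2 * S m + 1)%nat in hodd by lia.
    replace (2 * m + 1 + 1)%nat with (2 * S m)%nat in hodd by lia.
    assert (e1 : INR (2 * m + 1) = 2 * INR m + 1) by (rewrite plus_INR, mult_INR; simpl; ring).
    assert (e2 : INR (2 * S m) = 2 * (INR m + 1)) by (rewrite mult_INR, !S_INR; simpl; ring).
    assert (e3 : INR (2 * S m + 1) = 2 * (INR m + 1) + 1) by (rewrite plus_INR, e2; simpl; ring).
    rewrite e1, e2 in heven. rewrite e2, e3 in hodd.
    rewrite central_binomial_succ, S_INR. simpl pow.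
    split.
    + apply (Rmult_eq_reg_l (2 * (INR m + 1))); [|lra].
      rewrite heven, IHeven. field. split; lra.
    + apply (Rmult_eq_reg_l (2 * (INR m + 1) + 1)); [|lra].
      rewrite hodd, IHodd. field. repeat split; lra.
Qed.

Lemma central_binomial_sq_lower m :
  (4 ^ m) ^ 2 <= PI / 2 * (2 * INR m + 1) * Binomial.C (2 * m) m ^ 2.
Proof.
  pose proof (wallis_succ_le (2 * m)) as hle.
  replace (S (2 * m)) with (2 * m + 1)%nat in hle by lia.
  destruct (wallis_closed_forms m) as [heven hodd]. rewrite heven, hodd in hle.
  pose proof (central_binomial_pos m). pose proof (pos_INR m).
  assert (0 < 4 ^ m) by (apply pow_lt; lra).
  rewrite div_le_div_iff in hle by nra. nra.
Qed.

Lemma central_binomial_sq_upper m : PI * INR m * Binomial.C (2 * m) m ^ 2 <= (4 ^ m) ^ 2.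
Proof.
  destruct m as [|j]; [simpl; lra|].
  pose proof (wallis_succ_le (2 * j + 1)) as hle.
  replace (S (2 * j + 1)) with (2 * S j)%nat in hle by lia.
  rewrite (proj1 (wallis_closed_forms (S j))), (proj2 (wallis_closed_forms j)) in hle.
  rewrite central_binomial_succ, <- tech_pow_Rmult in hle. rewrite central_binomial_succ, S_INR.
  pose proof (central_binomial_pos j). pose proof (pos_INR j). pose proof PI_RGT_0.
  assert (0 < 4 ^ j) by (apply pow_lt; lra).
  rewrite div_le_div_iff in hle by nra.
  set (c := Binomial.C (2 * j) j) in *. set (x := INR j) in *.
  apply Rle_trans with (4 * (PI / 2 * (c * (2 * (2 * x + 1) / (x + 1))) * ((2 * x + 1) * c))).
  - right. field. lra.
  - replace ((4 ^ S j) ^ 2) with (4 * (4 ^ j * (4 * 4 ^ j))) by (simpl; ring). lra.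
Qed.

(** * Stirling's formula *)

Lemma stirling_sq_double m : (1 <= m)%nat ->
  stirling_sq m ^ 2 * INR m * Binomial.C (2 * m) m ^ 2 = 2 * (4 ^ m) ^ 2 * stirling_sq (2 * m).
Proof.
  intros hm. assert (hx : 0 < INR m) by (apply lt_0_INR; lia).
  unfold stirling_sq, Binomial.C. replace (2 * m - m)%nat with m by lia.
  replace (INR (2 * m)) with (2 * INR m) by (rewrite mult_INR; reflexivity).
  assert (hexp : exp (2 * (2 * INR m)) = exp (2 * INR m) ^ 2).
  { replace (2 * (2 * INR m)) with (2 * INR m + 2 * INR m) by ring. rewrite exp_plus. ring. }
  assert (hpow2 : 2 ^ (2 * (2 * m) + 1) = 2 * (4 ^ m) ^ 2).
  { replace 4 with (2 ^ 2) by ring. rewrite <- !pow_mult, pow_add.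
    replace (2 * (m * 2))%nat with (2 * (2 * m))%nat by lia. ring. }
  assert (hpowm : (INR m ^ (2 * m + 1)) ^ 2 = INR m * INR m ^ (2 * (2 * m) + 1)).
  { rewrite <- pow_mult, tech_pow_Rmult. f_equal. lia. }
  rewrite hexp, Rpow_mult_distr, hpow2.
  pose proof (lt_0_INR _ (lt_O_fact m)). pose proof (lt_0_INR _ (lt_O_fact (2 * m))).
  assert (0 < INR m ^ (2 * (2 * m) + 1)) by (apply pow_lt; lra).
  assert (0 < 4 ^ m) by (apply pow_lt; lra).
  unfold Rdiv. rewrite !Rpow_mult_distr, !pow_inv, hpowm.
  field. repeat split; lra.
Qed.

Lemma stirling_sq_sq_le m : (1 <= m)%nat ->
  stirling_sq m ^ 2 * INR m <= PI * (2 * INR m + 1) * stirling_sq (2 * m).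
Proof.
  intros hm.
  pose proof (central_binomial_pos m) as hc. pose proof (stirling_sq_pos (2 * m) ltac:(lia)).
  apply Rmult_le_reg_r with (Binomial.C (2 * m) m ^ 2); [now apply pow_lt|].
  rewrite stirling_sq_double by exact hm.
  pose proof (central_binomial_sq_lower m). nra.
Qed.

Lemma stirling_sq_sq_ge m : (1 <= m)%nat -> 2 * PI * stirling_sq (2 * m) <= stirling_sq m ^ 2.
Proof.
  intros hm.
  pose proof (central_binomial_pos m) as hc. pose proof (stirling_sq_pos (2 * m) ltac:(lia)).
  assert (hx : 0 < INR m) by (apply lt_0_INR; lia).
  apply Rmult_le_reg_r with (INR m * Binomial.C (2 * m) m ^ 2).
  { apply Rmult_lt_0_compat; [exact hx | now apply pow_lt]. }
  rewrite <- (Rmult_assoc (stirling_sq m ^ 2)), stirling_sq_double by exact hm.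
  pose proof (central_binomial_sq_upper m). nra.
Qed.

Lemma stirling_sq_ge m : (1 <= m)%nat -> 2 * PI <= stirling_sq m.
Proof.
  intros hm. pose proof PI_RGT_0.
  apply (le_of_forall_le_add_div _ _ (PI / 6) m); [lra|]. intros n hmn hn.
  assert (hx : 0 < INR n) by (apply lt_0_INR; lia).
  pose proof (stirling_sq_pos n hn).
  assert (hcorr : stirling_sq n * exp (- / (12 * INR n)) <= stirling_sq (2 * n)).
  { pose proof (stirling_sq_corrected_mono n (2 * n) hn ltac:(lia)) as hmono.
    rewrite mult_INR in hmono. simpl INR in hmono.
    replace (- / (6 * INR n)) with (- / (12 * INR n) + - / (12 * INR n)) in hmono by (field; lra).
    replace (- / (6 * ((1 + 1) * INR n))) with (- / (12 * INR n)) in hmono by (field; lra).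
    rewrite exp_plus, <- Rmult_assoc in hmono.
    exact (Rmult_le_reg_r _ _ _ (exp_pos _) hmono). }
  assert (hexp : 2 * PI * exp (- / (12 * INR n)) <= stirling_sq n).
  { pose proof (stirling_sq_sq_ge n hn). apply Rmult_le_reg_r with (stirling_sq n); nra. }
  pose proof (exp_ineq1_le (- / (12 * INR n))).
  pose proof (stirling_sq_antimono m n hm hmn).
  replace (PI / 6 / INR n) with (2 * PI * / (12 * INR n)) by (field; lra).
  nra.
Qed.

Lemma stirling_sq_le m : (1 <= m)%nat -> stirling_sq m * exp (- / (6 * INR m)) <= 2 * PI.
Proof.
  intros hm. pose proof PI_RGT_0.
  apply (le_of_forall_le_add_div _ _ PI m); [lra|]. intros n hmn hn.
  assert (hx : 0 < INR n) by (apply lt_0_INR; lia).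
  pose proof (stirling_sq_pos n hn).
  assert (hbound : stirling_sq n * INR n <= PI * (2 * INR n + 1)).
  { pose proof (stirling_sq_sq_le n hn).
    assert (PI * (2 * INR n + 1) * stirling_sq (2 * n) <= PI * (2 * INR n + 1) * stirling_sq n).
    { apply Rmult_le_compat_l; [nra | apply stirling_sq_antimono; lia]. }
    apply Rmult_le_reg_r with (stirling_sq n); nra. }
  assert (hexp1 : exp (- / (6 * INR n)) <= 1).
  { rewrite <- exp_0. apply exp_le_exp.
    assert (0 < / (6 * INR n)) by (apply Rinv_0_lt_compat; lra). lra. }
  pose proof (stirling_sq_corrected_mono m n hm hmn).
  assert (stirling_sq n <= 2 * PI + PI / INR n).
  { apply Rmult_le_reg_r with (INR n); [exact hx|].
    replace ((2 * PI + PI / INR n) * INR n) with (PI * (2 * INR n + 1)) by (field; lra).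
    exact hbound. }
  pose proof (exp_pos (- / (6 * INR n))). nra.
Qed.

Lemma fact_sq_exp_eq m : (1 <= m)%nat ->
  INR (fact m) ^ 2 * exp (2 * INR m) = stirling_sq m * ((INR m ^ m) ^ 2 * INR m).
Proof.
  intros hm. assert (0 < INR m) by (apply lt_0_INR; lia).
  unfold stirling_sq. rewrite <- pow_mult, (Rmult_comm (INR m ^ (m * 2))), tech_pow_Rmult.
  replace (S (m * 2))%nat with (2 * m + 1)%nat by lia.
  field. apply pow_nonzero. lra.
Qed.

Lemma fact_sq_lower m : (1 <= m)%nat ->
  2 * PI * ((INR m ^ m) ^ 2 * INR m) <= INR (fact m) ^ 2 * exp (2 * INR m).
Proof.
  intros hm. rewrite fact_sq_exp_eq by exact hm.
  apply Rmult_le_compat_r; [apply Rmult_le_pos; [apply pow2_ge_0 | apply pos_INR]|].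
  now apply stirling_sq_ge.
Qed.

Lemma fact_sq_upper m : (1 <= m)%nat ->
  INR (fact m) ^ 2 * exp (2 * INR m) <= 2 * PI * exp (/ (6 * INR m)) * ((INR m ^ m) ^ 2 * INR m).
Proof.
  intros hm. rewrite fact_sq_exp_eq by exact hm.
  apply Rmult_le_compat_r; [apply Rmult_le_pos; [apply pow2_ge_0 | apply pos_INR]|].
  pose proof (stirling_sq_le m hm) as hle.
  assert (hinv : exp (- / (6 * INR m)) * exp (/ (6 * INR m)) = 1).
  { rewrite <- exp_plus, Rplus_opp_l. apply exp_0. }
  apply Rmult_le_compat_r with (r := exp (/ (6 * INR m))) in hle; [|apply Rlt_le, exp_pos].
  rewrite Rmult_assoc, hinv, Rmult_1_r in hle. exact hle.
Qed.

(** * The binomial term *)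

Lemma weighted_amgm_pow a k r : 0 < a -> (1 <= k)%nat -> (1 <= r)%nat ->
  INR (k + r) ^ (k + r) * a ^ k <= INR k ^ k * INR r ^ r * (1 + a) ^ (k + r).
Proof.
  intros ha hk hr.
  assert (hK : 0 < INR k) by (apply lt_0_INR; lia).
  assert (hR : 0 < INR r) by (apply lt_0_INR; lia).
  rewrite plus_INR. set (n := INR k + INR r).
  set (y1 := n * a / (INR k * (1 + a))). set (y2 := n / (INR r * (1 + a))).
  assert (h1 : 0 < y1) by (unfold y1, n; apply Rdiv_lt_0_compat; nra).
  assert (h2 : 0 < y2) by (unfold y2, n; apply Rdiv_lt_0_compat; nra).
  (* Gibbs: [k ln y1 + r ln y2 <= k (y1 - 1) + r (y2 - 1) = 0]. *)
  assert (hprod : y1 ^ k * y2 ^ r <= 1).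
  { rewrite <- (exp_ln (y1 ^ k)), <- (exp_ln (y2 ^ r)), <- exp_plus by (apply pow_lt; lra).
    rewrite !ln_pow by assumption.
    rewrite <- exp_0. apply exp_le_exp.
    pose proof (ln_le_sub_1 y1 h1). pose proof (ln_le_sub_1 y2 h2).
    assert (INR k * (y1 - 1) + INR r * (y2 - 1) = 0) by (unfold y1, y2, n; field; lra).
    nra. }
  assert (hden : 0 < INR k ^ k * INR r ^ r * (1 + a) ^ (k + r)).
  { apply Rmult_lt_0_compat; [apply Rmult_lt_0_compat|]; apply pow_lt; lra. }
  replace (y1 ^ k * y2 ^ r) with (n ^ (k + r) * a ^ k / (INR k ^ k * INR r ^ r * (1 + a) ^ (k + r)))
    in hprod.
  - apply Rmult_le_reg_r with (/ (INR k ^ k * INR r ^ r * (1 + a) ^ (k + r))).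
    + now apply Rinv_0_lt_compat.
    + rewrite Rinv_r by lra. exact hprod.
  - unfold y1, y2, Rdiv. rewrite !Rpow_mult_distr, !pow_inv, !Rpow_mult_distr, !pow_add.
    field. repeat split; try apply pow_nonzero; lra.
Qed.

Lemma binomial_term_sq_le a k r : 0 < a -> (1 <= k)%nat -> (1 <= r)%nat ->
  2 * PI * INR k * INR r * (Binomial.C (k + r) k * a ^ k) ^ 2
  <= exp (/ (6 * INR (k + r))) * INR (k + r) * ((1 + a) ^ (k + r)) ^ 2.
Proof.
  intros ha hk hr.
  pose proof PI_RGT_0.
  assert (hK : 0 < INR k) by (apply lt_0_INR; lia).
  assert (hR : 0 < INR r) by (apply lt_0_INR; lia).
  assert (hPk : 0 < INR k ^ k) by (apply pow_lt; lra).
  assert (hPr : 0 < INR r ^ r) by (apply pow_lt; lra).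
  assert (hC : Binomial.C (k + r) k * (INR (fact k) * INR (fact r)) = INR (fact (k + r))).
  { unfold Binomial.C. replace (k + r - k)%nat with r by lia. field.
    split; apply not_0_INR, fact_neq_0. }
  assert (hexp : exp (2 * INR (k + r)) = exp (2 * INR k) * exp (2 * INR r)).
  { rewrite <- exp_plus, plus_INR. f_equal. ring. }
  pose proof (fact_sq_lower k hk) as hlk. pose proof (fact_sq_lower r hr) as hlr.
  pose proof (fact_sq_upper (k + r) ltac:(lia)) as hun.
  pose proof (weighted_amgm_pow a k r ha hk hr) as hamgm.
  set (T := Binomial.C (k + r) k * a ^ k) in *.
  apply Rmult_le_reg_r with (2 * PI * (INR k ^ k * INR r ^ r) ^ 2).
  { apply Rmult_lt_0_compat; [lra | apply pow_lt, Rmult_lt_0_compat; assumption]. }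
  apply Rle_trans with (T ^ 2 * (INR (fact k) ^ 2 * exp (2 * INR k)) * (INR (fact r) ^ 2 * exp (2 * INR r))).
  { apply Rle_trans with (T ^ 2 * (2 * PI * ((INR k ^ k) ^ 2 * INR k)) * (2 * PI * ((INR r ^ r) ^ 2 * INR r)));
      [right; ring|].
    assert (hpos : forall m, 0 <= 2 * PI * ((INR m ^ m) ^ 2 * INR m)).
    { intros m. apply Rmult_le_pos; [lra | apply Rmult_le_pos; [apply pow2_ge_0 | apply pos_INR]]. }
    apply Rmult_le_compat; [apply Rmult_le_pos; [apply pow2_ge_0 | apply hpos] | apply hpos | | exact hlr].
    apply Rmult_le_compat_l; [apply pow2_ge_0 | exact hlk]. }
  apply Rle_trans with (INR (fact (k + r)) ^ 2 * exp (2 * INR (k + r)) * (a ^ k) ^ 2).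
  { right. rewrite <- hC, hexp. unfold T. ring. }
  apply Rle_trans with (2 * PI * exp (/ (6 * INR (k + r))) * INR (k + r) * (INR (k + r) ^ (k + r) * a ^ k) ^ 2).
  { apply Rle_trans with (2 * PI * exp (/ (6 * INR (k + r))) * ((INR (k + r) ^ (k + r)) ^ 2 * INR (k + r)) * (a ^ k) ^ 2);
      [|right; ring].
    apply Rmult_le_compat_r; [apply pow2_ge_0 | exact hun]. }
  apply Rle_trans with (2 * PI * exp (/ (6 * INR (k + r))) * INR (k + r) * (INR k ^ k * INR r ^ r * (1 + a) ^ (k + r)) ^ 2);
    [|right; ring].
  apply Rmult_le_compat_l.
  - apply Rmult_le_pos; [apply Rmult_le_pos; [lra | apply Rlt_le, exp_pos] | apply pos_INR].
  - apply pow_incr. split; [|exact hamgm].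
    apply Rmult_le_pos; [apply pow_le, pos_INR | apply pow_le; lra].
Qed.

Lemma concave_quadratic_ge p q lo hi u T : lo <= u <= hi ->
  T <= p + q * lo - lo ^ 2 -> T <= p + q * hi - hi ^ 2 -> T <= p + q * u - u ^ 2.
Proof.
  intros hu hlo hhi.
  assert (hid : (hi - lo) * (p + q * u - u ^ 2)
    = (hi - u) * (p + q * lo - lo ^ 2) + (u - lo) * (p + q * hi - hi ^ 2)
      + (hi - lo) * ((u - lo) * (hi - u))) by ring.
  destruct (Req_dec lo hi) as [<- | hne].
  - replace u with lo by lra. exact hlo.
  - apply Rmult_le_reg_l with (hi - lo); [lra|].
    rewrite hid.
    assert (0 <= (hi - lo) * ((u - lo) * (hi - u))) by (apply Rmult_le_pos; nra).
    nra.
Qed.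

Lemma index_product_lower a l x K : 0 < a -> 0 < l < 1 -> 1 <= x * l * a -> a <= x * l ->
  K * (a + 1) <= a * (x + 1) -> a * (x + 1) < (K + 1) * (a + 1) ->
  (1 + / (3 * x)) * (x ^ 2 * a * (1 - l) ^ 2) <= K * (x - K) * (a + 1) ^ 2.
Proof.
  intros ha hl hxla hxl hK1 hK2.
  assert (hx : 0 < x) by nra.
  (* The floor conditions put [u] in [(-1, a]], and the right-hand side is a concave
     quadratic in [u], so only the endpoints need checking. *)
  set (u := K * (1 + a) - a * x).
  replace (K * (x - K) * (a + 1) ^ 2) with (a * x ^ 2 + x * (1 - a) * u - u ^ 2) by (unfold u; ring).
  replace ((1 + / (3 * x)) * (x ^ 2 * a * (1 - l) ^ 2))
    with (a * x ^ 2 * (1 - l) ^ 2 + a * x * (1 - l) ^ 2 / 3) by (field; lra).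
  apply (concave_quadratic_ge _ _ (-1) a); [unfold u; split; lra | |].
  - assert (0 <= x * (2 - l) * (x * l * a - 1)) by (apply Rmult_le_pos; nra).
    assert (0 <= x * a * (1 - (1 - l) ^ 2 / 3 - l)) by (apply Rmult_le_pos; nra).
    assert (0 <= x * (1 - l)) by nra.
    lra.
  - assert (0 <= a * x * (2 - l) * (x * l - a)) by (apply Rmult_le_pos; [apply Rmult_le_pos|]; nra).
    assert (0 <= x * a * (1 - (1 - l) ^ 2 / 3 - l)) by (apply Rmult_le_pos; nra).
    assert (0 <= a ^ 2 * x * (1 - l)) by (apply Rmult_le_pos; nra).
    assert (0 <= a * (x * l - a)) by nra.
    lra.
Qed.

Lemma kidx_binomial_sq_le a l n k : 0 < a -> 0 < l < 1 -> (1 <= k)%nat -> (k < n)%nat ->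
  1 <= INR n * l * a -> a <= INR n * l ->
  INR k * (a + 1) <= a * (INR n + 1) -> a * (INR n + 1) < (INR k + 1) * (a + 1) ->
  (Binomial.C n k * a ^ k) ^ 2 * (2 * PI * INR n * a * (1 - l) ^ 2) <= ((a + 1) * (1 + a) ^ n) ^ 2.
Proof.
  intros ha hl hk hkn hxla hxl hK1 hK2.
  assert (hx : 1 <= INR n) by (apply (le_INR 1); lia).
  assert (hK : 0 < INR k) by (apply lt_0_INR; lia).
  assert (hR : 0 < INR n - INR k) by (pose proof (lt_INR _ _ hkn); lra).
  pose proof (index_product_lower a l (INR n) (INR k) ha hl hxla hxl hK1 hK2) as hidx.
  assert (hE : exp (/ (6 * INR n)) <= 1 + / (3 * INR n)).
  { replace (/ (3 * INR n)) with (2 * / (6 * INR n)) by (field; lra).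
    apply exp_le_1_add_2x. split; [apply Rlt_le, Rinv_0_lt_compat; lra|].
    apply Rmult_le_reg_l with (6 * INR n); [lra|]. rewrite Rinv_r; lra. }
  pose proof (binomial_term_sq_le a k (n - k) ha hk ltac:(lia)) as hterm.
  replace (k + (n - k))%nat with n in hterm by lia. rewrite minus_INR in hterm by lia.
  set (T := Binomial.C n k * a ^ k) in *.
  set (B := (1 + a) ^ n) in *.
  set (E := exp (/ (6 * INR n))) in *.
  set (D := INR n * a * (1 - l) ^ 2).
  assert (hD : 0 <= D) by (unfold D; apply Rmult_le_pos; [nra | apply pow2_ge_0]).
  apply Rmult_le_reg_r with (INR k * (INR n - INR k)); [nra|].
  apply Rle_trans with (E * INR n * B ^ 2 * D).
  { apply Rle_trans with (2 * PI * INR k * (INR n - INR k) * T ^ 2 * D); [right; unfold D; ring|].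
    now apply Rmult_le_compat_r. }
  apply Rle_trans with (B ^ 2 * ((1 + / (3 * INR n)) * (INR n ^ 2 * a * (1 - l) ^ 2))).
  { apply Rle_trans with (B ^ 2 * (E * (INR n ^ 2 * a * (1 - l) ^ 2))); [right; unfold D; ring|].
    apply Rmult_le_compat_l; [apply pow2_ge_0|].
    apply Rmult_le_compat_r; [|exact hE]. apply Rmult_le_pos; [nra | apply pow2_ge_0]. }
  apply Rle_trans with (B ^ 2 * (INR k * (INR n - INR k) * (a + 1) ^ 2)); [|right; ring].
  apply Rmult_le_compat_l; [apply pow2_ge_0 | exact hidx].
Qed.

Lemma floorZ_spec x : IZR (floorZ x) <= x < IZR (floorZ x) + 1.
Proof. unfold floorZ. destruct (base_Int_part x). lra. Qed.

Lemma Nthreshold_spec a l n : 0 < a -> 0 < l -> (Nthreshold a l <= Z.of_nat n)%Z ->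
  a < INR n * l /\ 1 < INR n * l * a.
Proof.
  intros ha hl hn.
  apply Z.max_lub_iff in hn as [h1 h2].
  apply IZR_le in h1, h2. rewrite plus_IZR, <- INR_IZR_INZ in h1, h2.
  pose proof (floorZ_spec (a / l)). pose proof (floorZ_spec (1 / (l * a))).
  split.
  - replace a with (a / l * l) by (field; lra). apply Rmult_lt_compat_r; lra.
  - replace 1 with (1 / (l * a) * (l * a)) by (field; lra).
    rewrite Rmult_assoc. apply Rmult_lt_compat_r; [nra | lra].
Qed.

Lemma kidx_spec a n : 0 < a ->
  INR (kidx a n) * (a + 1) <= a * (INR n + 1) < (INR (kidx a n) + 1) * (a + 1).
Proof.
  intros ha. unfold kidx.
  set (x := a * (INR n + 1) / (a + 1)).
  assert (hx : 0 <= x) by (unfold x; apply Rle_mult_inv_pos; [pose proof (pos_INR n); nra | lra]).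
  pose proof (floorZ_spec x) as [hlo hhi].
  assert (hfl : (0 <= floorZ x)%Z).
  { assert (hneg : IZR (-1) < IZR (floorZ x)) by lra. apply lt_IZR in hneg. lia. }
  rewrite INR_IZR_INZ, Z2Nat.id by exact hfl.
  replace (a * (INR n + 1)) with (x * (a + 1)) by (unfold x; field; lra).
  split; [apply Rmult_le_compat_r | apply Rmult_lt_compat_r]; lra.
Qed.

Lemma Mconst_term_sq a l x B : 0 < a -> l < 1 -> 0 < x ->
  (Mconst a l / sqrt (2 * PI) * / sqrt x * B) ^ 2 * (2 * PI * x * a * (1 - l) ^ 2)
  = ((a + 1) * B) ^ 2.
Proof.
  intros ha hl hx. pose proof PI_RGT_0.
  assert (0 < sqrt a) by (apply sqrt_lt_R0; lra).
  assert (0 < sqrt (2 * PI)) by (apply sqrt_lt_R0; lra).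
  assert (0 < sqrt x) by (apply sqrt_lt_R0; lra).
  replace (2 * PI * x * a) with (sqrt (2 * PI) ^ 2 * sqrt x ^ 2 * sqrt a ^ 2)
    by (rewrite !pow2_sqrt; lra).
  unfold Mconst. field. repeat split; lra.
Qed.

Theorem proposition11 (a l : R) (ha : 0 < a) (hl0 : 0 < l) (hl1 : l < 1)
  (n : nat) (hn : (Nthreshold a l <= Z.of_nat n)%Z) :
  Binomial.C n (kidx a n) * a ^ (kidx a n)
  <= Mconst a l / sqrt (2 * PI) * / sqrt (INR n) * (1 + a) ^ n.
Proof.
  destruct (Nthreshold_spec a l n ha hl0 hn) as [hxl hxla].
  destruct (kidx_spec a n ha) as [hk1 hk2].
  assert (hx : 0 < INR n) by nra.
  assert (hk : (1 <= kidx a n)%nat).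
  { apply (INR_lt 0). simpl. nra. }
  assert (hkn : (kidx a n < n)%nat) by (apply INR_lt; nra).
  pose proof PI_RGT_0.
  apply Rsqr_incr_0_var.
  - rewrite !Rsqr_pow2.
    apply Rmult_le_reg_r with (2 * PI * INR n * a * (1 - l) ^ 2).
    { apply Rmult_lt_0_compat; [nra | apply pow_lt; lra]. }
    rewrite Mconst_term_sq by lra.
    apply kidx_binomial_sq_le; auto; lra.
  - unfold Mconst, Rdiv. apply Rlt_le.
    repeat apply Rmult_lt_0_compat;
      try apply Rinv_0_lt_compat; try apply sqrt_lt_R0; try apply pow_lt; lra.
Qed.
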